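(* Assume $k_{+\infty}=k_{-\infty}$, that $k^2(x)>0$ for all $x$ (no classically forbidden region), and that $k=\sqrt{k^2}$ is twice continuously differentiable. Then $$T\ \ge\ \mathrm{sech}^2\left\{\frac12\int_{-\infty}^{\infty}\left|\frac{1}{\sqrt{k}}\left(\frac{1}{\sqrt{k}}\right)''\right|\mathrm{d}x\right\}.$$
   Context: Standing setup: $k^2:\mathbb{R}\to\mathbb{R}$ is a function with $k^2(x)\to k_{\pm\infty}^2$ as $x\to\pm\infty$, where $k_{\pm\infty}>0$ and $k^2-k_{\pm\infty}^2$ is integrable near $\pm\infty$. For the equation $u''+k^2(x)u=0$ there is a solution with $u(x)=e^{ik_{-\infty}x}+r\,e^{-ik_{-\infty}x}+o(1)$ as $x\to-\infty$ and $u(x)=\tau\,e^{ik_{+\infty}x}+o(1)$ as $x\to+\infty$; the transmission probability is $T=(k_{+\infty}/k_{-\infty})|\tau|^2$. Here $\mathrm{sech}=1/\cosh$, and if the integral equals $+\infty$ the bound is read as the trivial statement $T\ge 0$. *)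

From Stdlib Require Import Reals Lra.
Open Scope R_scope.

Definition sech (x : R) : R := / cosh x.

Definition lim_pinf (f : R -> R) (l : R) : Prop :=
  forall eps, 0 < eps -> exists M, forall x, M <= x -> Rabs (f x - l) < eps.
Definition lim_minf (f : R -> R) (l : R) : Prop :=
  forall eps, 0 < eps -> exists M, forall x, x <= M -> Rabs (f x - l) < eps.

Definition RInt_eq (f : R -> R) (a b v : R) : Prop :=
  exists pr : Riemann_integrable f a b, RiemannInt pr = v.

Definition integrable_near_pinf (f : R -> R) : Prop :=
  exists a B, forall b, a <= b ->
    (exists v, RInt_eq f a b v) /\
    (exists v, RInt_eq (fun x => Rabs (f x)) a b v /\ v <= B).
Definition integrable_near_minf (f : R -> R) : Prop :=
  exists a B, forall b, b <= a ->
    (exists v, RInt_eq f b a v) /\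
    (exists v, RInt_eq (fun x => Rabs (f x)) b a v /\ v <= B).

Definition improper_integral (f : R -> R) (I : R) : Prop :=
  forall eps, 0 < eps -> exists M, forall a b, a <= - M -> M <= b ->
    exists v, RInt_eq f a b v /\ Rabs (v - I) < eps.

Definition C2 (f : R -> R) : Prop :=
  exists f1 f2 : R -> R,
    (forall x, derivable_pt_lim f x (f1 x)) /\
    (forall x, derivable_pt_lim f1 x (f2 x)) /\
    continuity f2.

(* transmission probability T = (k_{+oo}/k_{-oo}) |tau|^2, tau = tr + i ti *)
Definition transmission (kp km tr ti : R) : R := (kp / km) * (tr ^ 2 + ti ^ 2).

(* u = ur + i ui is a solution of u'' + k2 u = 0 with first derivatives
   ur1, ui1 and second derivatives ur2, ui2 *)
Definition is_solution (k2 ur ui ur1 ui1 ur2 ui2 : R -> R) : Prop :=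
  forall x,
    derivable_pt_lim ur x (ur1 x) /\ derivable_pt_lim ur1 x (ur2 x) /\
    derivable_pt_lim ui x (ui1 x) /\ derivable_pt_lim ui1 x (ui2 x) /\
    ur2 x + k2 x * ur x = 0 /\ ui2 x + k2 x * ui x = 0.

(* u(x) = e^{i km x} + r e^{-i km x} + o(1) as x -> -oo, r = rr + i ri *)
Definition left_asymptotics (km rr ri : R) (ur ui : R -> R) : Prop :=
  lim_minf (fun x => ur x - (cos (km * x) + rr * cos (km * x) + ri * sin (km * x))) 0 /\
  lim_minf (fun x => ui x - (sin (km * x) + ri * cos (km * x) - rr * sin (km * x))) 0.

(* u(x) = tau e^{i kp x} + o(1) as x -> +oo, tau = tr + i ti *)
Definition right_asymptotics (kp tr ti : R) (ur ui : R -> R) : Prop :=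
  lim_pinf (fun x => ur x - (tr * cos (kp * x) - ti * sin (kp * x))) 0 /\
  lim_pinf (fun x => ui x - (ti * cos (kp * x) + tr * sin (kp * x))) 0.

(* Writing [u = g psi] and measuring position by the Liouville variable
   [tau = \int dx / g^2], the equation [u'' + k^2 u = 0] becomes an oscillator
   [psi'' + psi = - g^3 g'' psi]. Its energy [E = (|psi|^2 + |psi'|^2) / 2]
   changes at the rate [E' = - g g'' Re (conj psi psi')] (in [x]), while the flux
   [c = Im (conj u u') = Im (conj psi psi')] is conserved, and
   [Re (conj psi psi')^2 + c^2 <= E^2]. Hence the barrier
   [ln (E + sqrt (E^2 - c^2))] can decrease by at most [\int |g g''|] across the
   line. At the right end [E = c = k |tau|^2]; at the left end
   [E = k (1 + |r|^2)] and [c = k (1 - |r|^2)], so that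
   [(1 + |r|)^2 <= e^I |tau|^2] with [I = \int |g g''|]; together with
   unitarity [|r|^2 + |tau|^2 = 1] this is [T >= sech^2 (I / 2)]. *)

From Stdlib Require Import Reals Lra Psatz FunctionalExtensionality.
From Coquelicot Require Import Coquelicot.
Open Scope R_scope.

Notation D := derivable_pt_lim.

(* Differentiation rules stated on lambda-terms, so that they apply directly
   to goals [D (fun y => ...) x l]; [deriv_eq] adjusts the derivative's form. *)
Lemma deriv_eq f x l l' : D f x l -> l = l' -> D f x l'.
Proof. now intros H <-. Qed.

Lemma deriv_fun_eq f h x l : (forall y, f y = h y) -> D f x l -> D h x l.
Proof. intros E H. now replace h with f by (apply functional_extensionality; exact E). Qed.

Lemma deriv_const c x : D (fun _ => c) x 0.
Proof. apply derivable_pt_lim_const. Qed.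

Lemma deriv_id x : D (fun y => y) x 1.
Proof. apply derivable_pt_lim_id. Qed.

Lemma deriv_plus f h x a b : D f x a -> D h x b -> D (fun y => f y + h y) x (a + b).
Proof. apply (derivable_pt_lim_plus f h). Qed.

Lemma deriv_minus f h x a b : D f x a -> D h x b -> D (fun y => f y - h y) x (a - b).
Proof. apply (derivable_pt_lim_minus f h). Qed.

Lemma deriv_opp f x a : D f x a -> D (fun y => - f y) x (- a).
Proof. apply (derivable_pt_lim_opp f). Qed.

Lemma deriv_mult f h x a b :
  D f x a -> D h x b -> D (fun y => f y * h y) x (a * h x + f x * b).
Proof. apply (derivable_pt_lim_mult f h). Qed.

Lemma deriv_comp f h x a b : D f x a -> D h (f x) b -> D (fun y => h (f y)) x (b * a).
Proof. apply (derivable_pt_lim_comp f h). Qed.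

Lemma deriv_pow f n x a : D f x a -> D (fun y => f y ^ n) x (INR n * f x ^ pred n * a).
Proof.
  intro H. eapply deriv_eq; [apply (deriv_comp f (fun y => y ^ n)); [exact H | apply derivable_pt_lim_pow] | ring].
Qed.

(* The square case of [deriv_pow], without [INR] in the derivative. *)
Lemma deriv_pow2 f x a : D f x a -> D (fun y => f y ^ 2) x (2 * f x * a).
Proof.
  intro H. apply (deriv_fun_eq (fun y => f y * f y)); [intro; ring|].
  eapply deriv_eq; [apply deriv_mult; exact H | ring].
Qed.

Lemma deriv_inv f x a : D f x a -> f x <> 0 -> D (fun y => / f y) x (- a / f x ^ 2).
Proof.
  intros H Hn. apply (deriv_fun_eq (fct_cte 1 / f)%F); [intro; unfold div_fct, fct_cte, Rdiv; ring|].
  eapply deriv_eq; [apply derivable_pt_lim_div; [apply derivable_pt_lim_const | exact H | exact Hn]|].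
  unfold fct_cte, Rsqr. field. exact Hn.
Qed.

Lemma deriv_sqrt f x a : D f x a -> 0 < f x -> D (fun y => sqrt (f y)) x (a / (2 * sqrt (f x))).
Proof.
  intros H Hp. eapply deriv_eq; [apply deriv_comp; [exact H | apply derivable_pt_lim_sqrt; exact Hp]|].
  unfold Rdiv; ring.
Qed.

Lemma deriv_ln f x a : D f x a -> 0 < f x -> D (fun y => ln (f y)) x (a / f x).
Proof.
  intros H Hp. eapply deriv_eq; [apply deriv_comp; [exact H | apply derivable_pt_lim_ln; exact Hp]|].
  unfold Rdiv; ring.
Qed.

Lemma deriv_cos_scaled k x : D (fun y => cos (k * y)) x (- k * sin (k * x)).
Proof.
  eapply deriv_eq.
  - apply (deriv_comp (fun y => k * y) cos); [| apply derivable_pt_lim_cos].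
    eapply deriv_eq; [apply deriv_mult; [apply deriv_const | apply deriv_id] | reflexivity].
  - ring.
Qed.

Lemma deriv_sin_scaled k x : D (fun y => sin (k * y)) x (k * cos (k * x)).
Proof.
  eapply deriv_eq.
  - apply (deriv_comp (fun y => k * y) sin); [| apply derivable_pt_lim_sin].
    eapply deriv_eq; [apply deriv_mult; [apply deriv_const | apply deriv_id] | reflexivity].
  - ring.
Qed.

(* Differentiating [f (- x)]: the key to transferring statements at [+oo] to [-oo]. *)
Lemma deriv_reflect f f' x : (forall y, D f y (f' y)) -> D (fun y => f (- y)) x (- f' (- x)).
Proof.
  intro H. eapply deriv_eq.
  - apply (deriv_comp (fun y => - y) f); [apply deriv_opp, deriv_id | apply H].
  - ring.
Qed.

Lemma continuity_of_deriv f x l : D f x l -> continuity_pt f x.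
Proof. intro H. apply derivable_continuous_pt. exists l; exact H. Qed.

(* Mechanical differentiation of an expression built from the rules above;
   side conditions (non-vanishing, positivity) are left to the caller. *)
Ltac differentiate :=
  repeat first
    [ apply deriv_const | apply deriv_id | eassumption
    | match goal with H : forall x, D ?f x _ |- D ?f _ _ => apply H end
    | apply deriv_pow2 | apply deriv_minus | apply deriv_plus | apply deriv_opp
    | apply deriv_pow | apply deriv_mult | apply deriv_inv | apply deriv_sqrt | apply deriv_ln ].

Lemma nondecreasing_of_deriv_nonneg F F' a b :
  (forall x, D F x (F' x)) -> (forall x, a <= x <= b -> 0 <= F' x) -> a <= b -> F a <= F b.
Proof.
  intros hF hpos [hab | <-]; [| lra].
  destruct (MVT_cor2 F F' a b hab) as [z [hz hzab]]; [intros; apply hF |].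
  assert (0 <= F' z) by (apply hpos; lra). nra.
Qed.

Lemma constant_of_deriv_zero F : (forall x, D F x 0) -> forall x y, F x = F y.
Proof.
  intros hF.
  assert (H : forall x y, x < y -> F x = F y).
  { intros x y hxy. destruct (MVT_cor2 F (fun _ => 0) x y hxy) as [z [hz _]]; [intros; apply hF | lra]. }
  intros x y. destruct (Rtotal_order x y) as [h | [-> | h]]; [apply H | | symmetry; apply H]; auto.
Qed.

Lemma antiderivative_exists f : continuity f -> exists P, forall x, D P x (f x).
Proof.
  intro hf. exists (RInt f 0). intro x. apply is_derive_Reals, (is_derive_RInt f (RInt f 0) 0).
  - apply filter_forall. intro b. apply (RInt_correct (V := R_CompleteNormedModule)).
    apply ex_RInt_continuous. intros z _. apply continuity_pt_filterlim, hf.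
  - apply continuity_pt_filterlim, hf.
Qed.

Lemma RiemannInt_antiderivative f P a b (pr : Riemann_integrable f a b) :
  continuity f -> (forall x, D P x (f x)) -> RiemannInt pr = P b - P a.
Proof.
  intros hf hP. rewrite <- RInt_Reals. apply is_RInt_unique, (is_RInt_derive P f).
  - intros x _. apply is_derive_Reals, hP.
  - intros x _. apply continuity_pt_filterlim, hf.
Qed.

Lemma lim_minf_reflect f l : lim_minf f l <-> lim_pinf (fun x => f (- x)) l.
Proof.
  split; intros H eps he; destruct (H eps he) as [M HM]; exists (- M); intros x hx.
  - apply HM; lra.
  - replace x with (- - x) by ring. apply HM; lra.
Qed.

Lemma lim_pinf_ext f h l : (forall x, f x = h x) -> lim_pinf f l -> lim_pinf h l.
Proof. intros E H eps he. destruct (H eps he) as [M HM]. exists M. intros x hx. rewrite <- E. auto. Qed.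

Lemma lim_minf_ext f h l : (forall x, f x = h x) -> lim_minf f l -> lim_minf h l.
Proof. intros E H eps he. destruct (H eps he) as [M HM]. exists M. intros x hx. rewrite <- E. auto. Qed.

Lemma lim_pinf_null f l : lim_pinf f l -> lim_pinf (fun x => f x - l) 0.
Proof. intros H eps he. destruct (H eps he) as [M HM]. exists M. intros x hx. rewrite Rminus_0_r. auto. Qed.

Lemma lim_pinf_continuous_comp f h l :
  lim_pinf f l -> continuity_pt h l -> lim_pinf (fun x => h (f x)) (h l).
Proof.
  intros hf hc eps he. destruct (hc eps he) as [del [hdel Hdel]].
  destruct (hf del hdel) as [M HM]. exists M. intros x hx.
  destruct (Req_dec (f x) l) as [-> | hne]; [rewrite Rminus_diag, Rabs_R0; exact he |].
  apply (Hdel (f x)). split; [split; [exact I | auto] | exact (HM x hx)].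
Qed.

Lemma lim_pinf_eventually_bounded f l : lim_pinf f l -> exists M, forall x, M <= x -> Rabs (f x) <= Rabs l + 1.
Proof.
  intro H. destruct (H 1 Rlt_0_1) as [M HM]. exists M. intros x hx.
  specialize (HM x hx). pose proof (Rabs_triang_inv (f x) l). lra.
Qed.

Lemma lim_pinf_eventually_above f l : lim_pinf f l -> 0 < l -> exists M, forall x, M <= x -> l / 2 <= f x.
Proof.
  intros H hl. destruct (H (l / 2)) as [M HM]; [lra |]. exists M. intros x hx.
  specialize (HM x hx). apply Rabs_def2 in HM. lra.
Qed.

Lemma lim_pinf_plus_null f h : lim_pinf f 0 -> lim_pinf h 0 -> lim_pinf (fun x => f x + h x) 0.
Proof.
  intros hf hh eps he. destruct (hf (eps / 2)) as [M1 H1]; [lra |]. destruct (hh (eps / 2)) as [M2 H2]; [lra |].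
  exists (Rmax M1 M2). intros x hx. pose proof (Rmax_l M1 M2). pose proof (Rmax_r M1 M2).
  specialize (H1 x ltac:(lra)). specialize (H2 x ltac:(lra)). rewrite Rminus_0_r in *.
  pose proof (Rabs_triang (f x) (h x)). lra.
Qed.

Lemma lim_pinf_bounded_mult f h B :
  (exists M, forall x, M <= x -> Rabs (f x) <= B) -> lim_pinf h 0 -> lim_pinf (fun x => f x * h x) 0.
Proof.
  intros [M1 H1] hh eps he. destruct (hh (eps / (Rabs B + 1))) as [M2 H2].
  { apply Rdiv_lt_0_compat; [exact he | pose proof (Rabs_pos B); lra]. }
  exists (Rmax M1 M2). intros x hx. pose proof (Rmax_l M1 M2). pose proof (Rmax_r M1 M2).
  specialize (H1 x ltac:(lra)). specialize (H2 x ltac:(lra)). rewrite Rminus_0_r in *.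
  rewrite Rabs_mult. pose proof (Rabs_pos (h x)). pose proof (Rle_abs B).
  assert (Rabs (h x) * (Rabs B + 1) < eps).
  { apply Rmult_lt_reg_r with (/ (Rabs B + 1)); [apply Rinv_0_lt_compat; pose proof (Rabs_pos B); lra |].
    rewrite Rmult_assoc, Rinv_r by (pose proof (Rabs_pos B); lra). rewrite Rmult_1_r. exact H2. }
  nra.
Qed.

Lemma lim_pinf_opp f l : lim_pinf f l -> lim_pinf (fun x => - f x) (- l).
Proof.
  intros H eps he. destruct (H eps he) as [M HM]. exists M. intros x hx.
  replace (- f x - - l) with (- (f x - l)) by ring. rewrite Rabs_Ropp. auto.
Qed.

Lemma lim_pinf_seq f l (s : nat -> R) :
  lim_pinf f l -> (forall M, exists N, forall n, (N <= n)%nat -> M <= s n) -> Un_cv (fun n => f (s n)) l.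
Proof.
  intros hf hs eps he. destruct (hf eps he) as [M HM]. destruct (hs M) as [N HN].
  exists N. intros n hn. apply HM, HN. lia.
Qed.

(* If [p] and [p''] tend to zero at [+oo], so does [p']: by the mean value
   theorem [p'] is close to a difference quotient of [p] over a unit step,
   up to a variation controlled by [p'']. *)
Lemma deriv_vanishes_pinf (p p1 p2 : R -> R) :
  (forall x, D p x (p1 x)) -> (forall x, D p1 x (p2 x)) ->
  lim_pinf p 0 -> lim_pinf p2 0 -> lim_pinf p1 0.
Proof.
  intros h1 h2 hp hp2 eps he.
  destruct (hp (eps / 4)) as [M1 H1]; [lra |]. destruct (hp2 (eps / 2)) as [M2 H2]; [lra |].
  exists (Rmax M1 M2). intros x hx. pose proof (Rmax_l M1 M2). pose proof (Rmax_r M1 M2).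
  destruct (MVT_cor2 p p1 x (x + 1)) as [z [hz hzx]]; [lra | intros; apply h1 |].
  destruct (MVT_cor2 p1 p2 x z) as [w [hw hwx]]; [lra | intros; apply h2 |].
  assert (a1 := H1 x ltac:(lra)). assert (a2 := H1 (x + 1) ltac:(lra)). assert (a3 := H2 w ltac:(lra)).
  rewrite Rminus_0_r in *. apply Rabs_def2 in a1, a2.
  assert (close_z : Rabs (p1 z) < eps / 2) by (apply Rabs_def1; nra).
  assert (drift : Rabs (p1 z - p1 x) < eps / 2).
  { rewrite hw, Rabs_mult, (Rabs_right (z - x)) by lra. pose proof (Rabs_pos (p2 w)). nra. }
  apply Rabs_def2 in close_z, drift. apply Rabs_def1; lra.
Qed.

Lemma Un_cv_eq (u v : nat -> R) l l' : (forall n, u n = v n) -> l = l' -> Un_cv u l -> Un_cv v l'.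
Proof. intros E <- H eps he. destruct (H eps he) as [N HN]. exists N. intros n hn. rewrite <- E. auto. Qed.

Lemma Un_cv_const c : Un_cv (fun _ => c) c.
Proof. intros eps he. exists 0%nat. intros. unfold R_dist. rewrite Rminus_diag, Rabs_R0. exact he. Qed.

Lemma Un_cv_pow2 u l : Un_cv u l -> Un_cv (fun n => u n ^ 2) (l ^ 2).
Proof. intro H. apply (Un_cv_eq (fun n => u n * u n) _ (l * l)); [intro; ring | ring | apply CV_mult; exact H]. Qed.

Lemma Un_cv_inv u l : Un_cv u l -> l <> 0 -> Un_cv (fun n => / u n) (/ l).
Proof.
  intros H hl. apply (continuity_seq Rinv u l); [| exact H].
  eapply continuity_of_deriv. apply (deriv_inv (fun y => y)); [apply deriv_id | exact hl].
Qed.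

Ltac converge :=
  repeat first [ apply Un_cv_const | eassumption | apply Un_cv_pow2 | apply CV_minus | apply CV_plus
               | apply CV_mult | apply Un_cv_inv ].

Lemma Un_cv_le u v l1 l2 e :
  Un_cv u l1 -> Un_cv v l2 -> (exists N, forall n, (N <= n)%nat -> u n <= v n + e) -> l1 <= l2 + e.
Proof.
  intros hu hv [N HN]. destruct (Rle_dec l1 (l2 + e)) as [h | h]; [exact h | exfalso].
  set (d := (l1 - l2 - e) / 2). assert (hd : 0 < d) by (unfold d; lra).
  destruct (hu d hd) as [N1 H1]. destruct (hv d hd) as [N2 H2].
  specialize (HN (N + N1 + N2)%nat ltac:(lia)). specialize (H1 (N + N1 + N2)%nat ltac:(lia)).
  specialize (H2 (N + N1 + N2)%nat ltac:(lia)). unfold R_dist in *.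
  apply Rabs_def2 in H1, H2. unfold d in *. lra.
Qed.

Lemma lim_pinf_seq_offset f h l (s : nat -> R) :
  lim_pinf (fun x => f x - h x) 0 -> (forall n, h (s n) = l) ->
  (forall M, exists N, forall n, (N <= n)%nat -> M <= s n) -> Un_cv (fun n => f (s n)) l.
Proof.
  intros H hs hdiv. apply (Un_cv_eq (fun n => (f (s n) - h (s n)) + l) _ (0 + l)); [intro n; rewrite hs; ring | ring |].
  apply CV_plus; [exact (lim_pinf_seq _ _ s H hdiv) | apply Un_cv_const].
Qed.

Definition lattice (k : R) (n : nat) : R := 2 * INR n * PI / k.

Lemma lattice_phase k n : 0 < k -> cos (k * lattice k n) = 1 /\ sin (k * lattice k n) = 0.
Proof.
  intro hk. unfold lattice. replace (k * (2 * INR n * PI / k)) with (0 + 2 * INR n * PI) by (field; lra).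
  rewrite cos_period, sin_period, cos_0, sin_0. split; reflexivity.
Qed.

Lemma lattice_diverges k : 0 < k -> forall M, exists N, forall n, (N <= n)%nat -> M <= lattice k n.
Proof.
  intros hk M. destruct (INR_unbounded (M * k / (2 * PI))) as [N HN]. exists N.
  intros n hn. apply le_INR in hn. pose proof PI_RGT_0. unfold lattice.
  apply Rmult_le_reg_r with (k / (2 * PI)); [apply Rdiv_lt_0_compat; lra |].
  replace (2 * INR n * PI / k * (k / (2 * PI))) with (INR n) by (field; lra).
  unfold Rdiv in *. lra.
Qed.

Definition wave (k a b x : R) : R := a * cos (k * x) + b * sin (k * x).
Definition wave_deriv (k a b x : R) : R := k * (b * cos (k * x) - a * sin (k * x)).

Lemma deriv_wave k a b x : D (wave k a b) x (wave_deriv k a b x).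
Proof.
  unfold wave, wave_deriv. eapply deriv_eq.
  - apply deriv_plus; apply deriv_mult; [apply deriv_const | apply deriv_cos_scaled | apply deriv_const | apply deriv_sin_scaled].
  - cbv beta. ring.
Qed.

Lemma deriv_wave_deriv k a b x : D (wave_deriv k a b) x (- k ^ 2 * wave k a b x).
Proof.
  unfold wave, wave_deriv. eapply deriv_eq.
  - apply deriv_mult; [apply deriv_const |].
    apply deriv_minus; apply deriv_mult; [apply deriv_const | apply deriv_cos_scaled | apply deriv_const | apply deriv_sin_scaled].
  - cbv beta. ring.
Qed.

Lemma wave_bound k a b x : Rabs (wave k a b x) <= Rabs a + Rabs b.
Proof.
  unfold wave. eapply Rle_trans; [apply Rabs_triang |]. rewrite !Rabs_mult.
  pose proof (COS_bound (k * x)). pose proof (SIN_bound (k * x)).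
  assert (Rabs (cos (k * x)) <= 1) by (apply Rabs_le; lra).
  assert (Rabs (sin (k * x)) <= 1) by (apply Rabs_le; lra).
  pose proof (Rabs_pos a). pose proof (Rabs_pos b).
  pose proof (Rabs_pos (cos (k * x))). pose proof (Rabs_pos (sin (k * x))). nra.
Qed.

Lemma wave_reflect k a b x : wave k a b (- x) = wave k a (- b) x.
Proof. unfold wave. replace (k * - x) with (- (k * x)) by ring. rewrite cos_neg, sin_neg. ring. Qed.

Lemma wave_lattice k a b n : 0 < k -> wave k a b (lattice k n) = a /\ wave_deriv k a b (lattice k n) = k * b.
Proof. intro hk. unfold wave, wave_deriv. destruct (lattice_phase k n hk) as [-> ->]. split; ring. Qed.

Section WaveAsymptotics.
Variables (k2 u u1 u2 : R -> R) (k a b : R).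
Hypothesis hk : 0 < k.
Hypothesis hu : forall x, D u x (u1 x).
Hypothesis hu1 : forall x, D u1 x (u2 x).
Hypothesis heq : forall x, u2 x + k2 x * u x = 0.
Hypothesis hk2 : lim_pinf k2 (k ^ 2).
Hypothesis hwave : lim_pinf (fun x => u x - wave k a b x) 0.

(* [u'' + k^2 wave = - k2 (u - wave) - (k2 - k^2) wave], a bounded multiple of null terms. *)
Lemma second_deriv_wave_asymptotics : lim_pinf (fun x => u2 x - - k ^ 2 * wave k a b x) 0.
Proof.
  apply (lim_pinf_ext (fun x => - k2 x * (u x - wave k a b x) + - wave k a b x * (k2 x - k ^ 2))).
  { intro x. pose proof (heq x). nra. }
  apply lim_pinf_plus_null.
  - destruct (lim_pinf_eventually_bounded _ _ hk2) as [M HM].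
    apply (lim_pinf_bounded_mult _ _ (Rabs (k ^ 2) + 1)); [| exact hwave].
    exists M. intros x hx. rewrite Rabs_Ropp. auto.
  - apply (lim_pinf_bounded_mult _ _ (Rabs a + Rabs b)); [| exact (lim_pinf_null _ _ hk2)].
    exists 0. intros x _. rewrite Rabs_Ropp. apply wave_bound.
Qed.

Lemma deriv_wave_asymptotics : lim_pinf (fun x => u1 x - wave_deriv k a b x) 0.
Proof.
  apply (deriv_vanishes_pinf (fun x => u x - wave k a b x) _ (fun x => u2 x - - k ^ 2 * wave k a b x)).
  - intro x. apply deriv_minus; [apply hu | apply deriv_wave].
  - intro x. apply deriv_minus; [apply hu1 | apply deriv_wave_deriv].
  - exact hwave.
  - exact second_deriv_wave_asymptotics.
Qed.

Lemma lattice_limits_pinf :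
  Un_cv (fun n => u (lattice k n)) a /\ Un_cv (fun n => u1 (lattice k n)) (k * b).
Proof.
  split.
  - apply (lim_pinf_seq_offset _ (wave k a b)); [exact hwave | | apply lattice_diverges, hk].
    intro n. apply wave_lattice, hk.
  - apply (lim_pinf_seq_offset _ (wave_deriv k a b)); [exact deriv_wave_asymptotics | | apply lattice_diverges, hk].
    intro n. apply wave_lattice, hk.
Qed.
End WaveAsymptotics.

(* The same at [-oo], by applying the above to the reflected solution [u (- x)]. *)
Lemma lattice_limits_minf (k2 u u1 u2 : R -> R) (k a b : R) :
  0 < k -> (forall x, D u x (u1 x)) -> (forall x, D u1 x (u2 x)) -> (forall x, u2 x + k2 x * u x = 0) ->
  lim_minf k2 (k ^ 2) -> lim_minf (fun x => u x - wave k a b x) 0 ->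
  Un_cv (fun n => u (- lattice k n)) a /\ Un_cv (fun n => u1 (- lattice k n)) (k * b).
Proof.
  intros hk hu hu1 heq hk2 hwave.
  destruct (lattice_limits_pinf (fun x => k2 (- x)) (fun x => u (- x)) (fun x => - u1 (- x))
              (fun x => u2 (- x)) k a (- b)) as [hlim hlim1].
  - exact hk.
  - intro x. apply deriv_reflect, hu.
  - intro x. eapply deriv_eq; [apply deriv_opp, deriv_reflect, hu1 | ring].
  - intro x. apply heq.
  - apply lim_minf_reflect, hk2.
  - apply lim_minf_reflect in hwave. revert hwave. apply lim_pinf_ext. intro x. rewrite wave_reflect. reflexivity.
  - split; [exact hlim |]. apply CV_opp in hlim1. revert hlim1. apply Un_cv_eq; intros; unfold opp_seq; ring.
Qed.

Definition increments_vanish_pinf (P : R -> R) : Prop :=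
  forall eps, 0 < eps -> exists M, forall x y, M <= x -> x <= y -> P y - P x <= eps.
Definition increments_vanish_minf (P : R -> R) : Prop :=
  forall eps, 0 < eps -> exists M, forall x y, y <= M -> x <= y -> P y - P x <= eps.

Definition total_increment (P : R -> R) (I : R) : Prop :=
  forall eps, 0 < eps -> exists M, forall a b, a <= - M -> M <= b -> Rabs (P b - P a - I) < eps.

Lemma improper_integral_increment f P I :
  continuity f -> (forall x, D P x (f x)) -> improper_integral f I -> total_increment P I.
Proof.
  intros hf hP hI eps he. destruct (hI eps he) as [M HM]. exists M. intros a b ha hb.
  destruct (HM a b ha hb) as [v [[pr <-] hv]]. rewrite <- (RiemannInt_antiderivative f P a b pr hf hP). exact hv.
Qed.

Lemma total_increment_tails P I :
  total_increment P I -> increments_vanish_pinf P /\ increments_vanish_minf P.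
Proof.
  intro hP. split; intros eps he; destruct (hP (eps / 2)) as [M HM]; try lra;
    pose proof (RRle_abs M); pose proof (Rabs_pos M).
  - exists (Rabs M). intros x y hx hxy.
    pose proof (HM (- Rabs M) x ltac:(lra) ltac:(lra)) as to_x. pose proof (HM (- Rabs M) y ltac:(lra) ltac:(lra)) as to_y.
    apply Rabs_def2 in to_x, to_y. lra.
  - exists (- Rabs M). intros x y hy hxy.
    pose proof (HM x (Rabs M) ltac:(lra) ltac:(lra)) as from_x. pose proof (HM y (Rabs M) ltac:(lra) ltac:(lra)) as from_y.
    apply Rabs_def2 in from_x, from_y. lra.
Qed.

Lemma slope_oscillation (g g1 g2 P : R -> R) m a b :
  (forall x, D g1 x (g2 x)) -> (forall x, D P x (Rabs (g x * g2 x))) ->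
  0 < m -> (forall x, a <= x <= b -> m <= g x) -> a <= b ->
  Rabs (g1 b - g1 a) <= (P b - P a) / m.
Proof.
  intros hg1 hP hm hlow hab.
  assert (dominated : forall x, a <= x <= b -> Rabs (g2 x) <= Rabs (g x * g2 x) / m).
  { intros x hx. specialize (hlow x hx). rewrite Rabs_mult, (Rabs_right (g x)) by lra.
    apply Rmult_le_reg_r with m; [exact hm |]. unfold Rdiv. rewrite Rmult_assoc, Rinv_l by lra.
    pose proof (Rabs_pos (g2 x)). nra. }
  assert (up : g1 b + P b / m >= g1 a + P a / m).
  { apply Rle_ge, (nondecreasing_of_deriv_nonneg (fun x => g1 x + P x / m)
                    (fun x => g2 x + Rabs (g x * g2 x) / m)); [| | exact hab].
    - intro x. unfold Rdiv. apply deriv_plus; [apply hg1 | eapply deriv_eq; [apply deriv_mult; [apply hP | apply deriv_const] | cbv beta; ring]].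
    - intros x hx. pose proof (dominated x hx). pose proof (Rle_abs (- g2 x)). rewrite Rabs_Ropp in *. lra. }
  assert (down : - g1 b + P b / m >= - g1 a + P a / m).
  { apply Rle_ge, (nondecreasing_of_deriv_nonneg (fun x => - g1 x + P x / m)
                    (fun x => - g2 x + Rabs (g x * g2 x) / m)); [| | exact hab].
    - intro x. unfold Rdiv. apply deriv_plus; [apply deriv_opp, hg1 | eapply deriv_eq; [apply deriv_mult; [apply hP | apply deriv_const] | cbv beta; ring]].
    - intros x hx. pose proof (dominated x hx). pose proof (Rle_abs (g2 x)). lra. }
  apply Rabs_le. unfold Rdiv in *. lra.
Qed.

(* A function with a positive limit at [+oo] and [|g g''|] of finite integral
   there has a slope tending to zero: over a unit step [g'] is a difference
   quotient of [g] up to the oscillation bounded above. *)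
Lemma slope_vanishes_pinf (g g1 g2 P : R -> R) gam :
  0 < gam -> lim_pinf g gam -> (forall x, D g x (g1 x)) -> (forall x, D g1 x (g2 x)) ->
  (forall x, D P x (Rabs (g x * g2 x))) -> increments_vanish_pinf P -> lim_pinf g1 0.
Proof.
  intros hgam hlim hg hg1 hP htail eps he.
  destruct (lim_pinf_eventually_above _ _ hlim hgam) as [M1 H1].
  destruct (hlim (eps / 4)) as [M2 H2]; [lra |].
  destruct (htail (eps * (gam / 2) / 2)) as [M3 H3]; [apply Rdiv_lt_0_compat; nra |].
  exists (Rmax M1 (Rmax M2 M3)). intros x hx. rewrite Rminus_0_r.
  pose proof (Rmax_l M1 (Rmax M2 M3)). pose proof (Rmax_r M1 (Rmax M2 M3)).
  pose proof (Rmax_l M2 M3). pose proof (Rmax_r M2 M3).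
  destruct (MVT_cor2 g g1 x (x + 1)) as [z [hz hzx]]; [lra | intros; apply hg |].
  replace (x + 1 - x) with 1 in hz by ring.
  assert (quotient : Rabs (g1 z) < eps / 2).
  { pose proof (H2 x ltac:(lra)) as near_x. pose proof (H2 (x + 1) ltac:(lra)) as near_x1.
    apply Rabs_def2 in near_x, near_x1. apply Rabs_def1; nra. }
  assert (oscillation : Rabs (g1 z - g1 x) <= eps / 2).
  { eapply Rle_trans; [apply (slope_oscillation g g1 g2 P (gam / 2)); auto; [lra | intros; apply H1; lra | lra] |].
    pose proof (H3 x z ltac:(lra) ltac:(lra)) as tail.
    apply Rmult_le_reg_r with (gam / 2); [lra |]. unfold Rdiv at 1. rewrite Rmult_assoc, Rinv_l by lra. lra. }
  replace (g1 x) with (g1 z - (g1 z - g1 x)) by ring.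
  pose proof (Rabs_triang (g1 z) (- (g1 z - g1 x))). rewrite Rabs_Ropp in *. unfold Rminus at 1. lra.
Qed.

Lemma slope_vanishes_minf (g g1 g2 P : R -> R) gam :
  0 < gam -> lim_minf g gam -> (forall x, D g x (g1 x)) -> (forall x, D g1 x (g2 x)) ->
  (forall x, D P x (Rabs (g x * g2 x))) -> increments_vanish_minf P -> lim_minf g1 0.
Proof.
  intros hgam hlim hg hg1 hP htail. apply lim_minf_reflect.
  apply (lim_pinf_ext (fun x => - - g1 (- x))); [intro; ring |]. rewrite <- Ropp_0. apply lim_pinf_opp.
  apply (slope_vanishes_pinf (fun x => g (- x)) _ (fun x => g2 (- x)) (fun x => - P (- x)) gam hgam).
  - apply lim_minf_reflect, hlim.
  - intro x. apply deriv_reflect, hg.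
  - intro x. eapply deriv_eq; [apply deriv_opp, deriv_reflect, hg1 | cbv beta; ring].
  - intro x. eapply deriv_eq; [apply deriv_opp, deriv_reflect, hP | cbv beta; ring].
  - intros eps he. destruct (htail eps he) as [M HM]. exists (- M). intros x y hx hxy.
    specialize (HM (- y) (- x) ltac:(lra) ltac:(lra)). lra.
Qed.

(* The envelope [k^(-1/2) = k2^(-1/4)], the amplitude of the WKB approximation. *)
Definition envelope (k2 : R -> R) (x : R) : R := / sqrt (sqrt (k2 x)).

Lemma fourth_root_pos y : 0 < y -> 0 < sqrt (sqrt y).
Proof. intro h. apply sqrt_lt_R0, sqrt_lt_R0, h. Qed.

Lemma envelope_pos k2 x : 0 < k2 x -> 0 < envelope k2 x.
Proof. intro h. apply Rinv_0_lt_compat, fourth_root_pos, h. Qed.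

Lemma envelope_quartic k2 x : 0 < k2 x -> k2 x * envelope k2 x ^ 4 = 1.
Proof.
  intro h. unfold envelope. pose proof (fourth_root_pos _ h).
  assert (root4 : sqrt (sqrt (k2 x)) ^ 4 = k2 x).
  { replace (sqrt (sqrt (k2 x)) ^ 4) with ((sqrt (sqrt (k2 x)) * sqrt (sqrt (k2 x))) ^ 2) by ring.
    rewrite sqrt_sqrt by (apply sqrt_pos). rewrite <- Rsqr_pow2. apply Rsqr_sqrt. lra. }
  rewrite pow_inv, root4. field. lra.
Qed.

Lemma envelope_limit f k : 0 < k -> lim_pinf f (k ^ 2) -> lim_pinf (fun x => / sqrt (sqrt (f x))) (/ sqrt k).
Proof.
  intros hk hf. replace (/ sqrt k) with (/ sqrt (sqrt (k ^ 2))) by (rewrite sqrt_pow2; lra).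
  apply (lim_pinf_continuous_comp f (fun y => / sqrt (sqrt y))); [exact hf |].
  assert (hk2 : 0 < k ^ 2) by (apply pow_lt, hk). pose proof (fourth_root_pos _ hk2).
  assert (0 < sqrt (k ^ 2)) by (apply sqrt_lt_R0, hk2).
  eapply continuity_of_deriv. differentiate; lra.
Qed.

(* If [k = sqrt k2] is C^2 then so is the envelope [k^(-1/2)]: writing
   [s = k^(1/2)], one has [g' = - k' / (2 s^3)] and
   [g'' = - k'' / (2 s^3) + 3 k'^2 / (4 s^5)]. *)
Lemma envelope_second_deriv_continuous k2 w1 w2 :
  (forall x, 0 < k2 x) -> C2 (fun x => sqrt (k2 x)) ->
  (forall x, D (envelope k2) x (w1 x)) -> (forall x, D w1 x (w2 x)) -> continuity w2.
Proof.
  intros hpos [k1 [k3 [hk1 [hk3 hcont]]]] hw1 hw2.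
  set (s := fun x => sqrt (sqrt (k2 x))).
  assert (spos : forall x, 0 < s x) by (intro; apply fourth_root_pos, hpos).
  assert (spow : forall n x, 0 < s x ^ n) by (intros; apply pow_lt, spos).
  assert (ds : forall x, D s x (k1 x / (2 * s x))).
  { intro x. apply (deriv_sqrt (fun y => sqrt (k2 y))); [apply hk1 | apply sqrt_lt_R0, hpos]. }
  assert (w1_eq : forall x, w1 x = - k1 x * / (2 * s x ^ 3)).
  { intro x. apply (uniqueness_limite (envelope k2) x); [apply hw1 |].
    eapply deriv_eq; [apply (deriv_inv s); [apply ds | apply Rgt_not_eq, spos] |].
    specialize (spos x). field. lra. }
  assert (w2_eq : forall x, w2 x = k3 x * - / (2 * s x ^ 3) + k1 x ^ 2 * (3 / (4 * s x ^ 5))).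
  { intro x. apply (uniqueness_limite w1 x); [apply hw2 |].
    apply (deriv_fun_eq (fun y => - k1 y * / (2 * s y ^ 3))); [intro; symmetry; apply w1_eq |].
    eapply deriv_eq; [differentiate; specialize (spow 3%nat x); lra |].
    cbv beta. simpl pred. rewrite !S_INR, INR_0. specialize (spos x). field. lra. }
  intro x. apply (continuity_pt_ext (fun y => k3 y * - / (2 * s y ^ 3) + k1 y ^ 2 * (3 / (4 * s y ^ 5))));
    [intro; symmetry; apply w2_eq |].
  pose proof (spow 3%nat x). pose proof (spow 5%nat x).
  apply continuity_pt_plus; apply continuity_pt_mult; [apply hcont | | |].
  all: eapply continuity_of_deriv; unfold Rdiv; differentiate; lra.
Qed.

(* Liouville-Green quantities of a solution [u = ur + i ui] relative to an
   envelope [g]: the normalized amplitude [u / g] and its derivative in the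
   Liouville variable, [g u' - g' u = g^2 (u / g)']. In these variables the
   equation becomes an oscillator [psi'' + psi = - g^3 g'' psi], with energy
   [|psi|^2 / 2 + |psi'|^2 / 2], energy rate [Re (conj psi psi')] and
   conserved flux [Im (conj psi psi') = Im (conj u u')]. *)
Definition liouville_deriv (g g1 u u1 : R -> R) (x : R) : R := g x * u1 x - g1 x * u x.

Definition energy (g g1 ur ui ur1 ui1 : R -> R) (x : R) : R :=
  / 2 * ((ur x / g x) ^ 2 + (ui x / g x) ^ 2
         + liouville_deriv g g1 ur ur1 x ^ 2 + liouville_deriv g g1 ui ui1 x ^ 2).

Definition energy_rate (g g1 ur ui ur1 ui1 : R -> R) (x : R) : R :=
  ur x / g x * liouville_deriv g g1 ur ur1 x + ui x / g x * liouville_deriv g g1 ui ui1 x.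

Definition flux (ur ui ur1 ui1 : R -> R) (x : R) : R := ur x * ui1 x - ui x * ur1 x.

(* Regularized Lyapunov function of the energy at flux [c]: for [dl = 0] it is
   [ln (E + sqrt (E^2 - c^2))], and [dl > 0] keeps it differentiable. *)
Definition barrier (c dl e : R) : R := ln (e + sqrt (e ^ 2 - c ^ 2 + dl)).

Lemma deriv_barrier E E' c dl x :
  D E x E' -> 0 < E x ^ 2 - c ^ 2 + dl -> 0 <= E x ->
  D (fun y => barrier c dl (E y)) x (E' / sqrt (E x ^ 2 - c ^ 2 + dl)).
Proof.
  intros hE hpos hnonneg. unfold barrier.
  pose proof (sqrt_lt_R0 _ hpos) as hsqrt. pose proof (sqrt_sqrt _ (Rlt_le _ _ hpos)) as hsq.
  eapply deriv_eq; [apply deriv_ln; [differentiate | lra] |].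
  cbv beta. field. split; lra.
Qed.

Lemma barrier_continuous c dl e : 0 < e ^ 2 - c ^ 2 + dl -> 0 <= e -> continuity_pt (barrier c dl) e.
Proof.
  intros hpos hnonneg. eapply continuity_of_deriv.
  apply (deriv_barrier (fun y => y) 1); [apply deriv_id | exact hpos | exact hnonneg].
Qed.

Section Energy.
Variables (k2 g g1 g2 ur ui ur1 ui1 ur2 ui2 : R -> R).
Hypothesis hg : forall x, 0 < g x.
Hypothesis hquartic : forall x, k2 x * g x ^ 4 = 1.
Hypothesis hg0 : forall x, D g x (g1 x).
Hypothesis hg1 : forall x, D g1 x (g2 x).
Hypothesis hsol : is_solution k2 ur ui ur1 ui1 ur2 ui2.

Lemma energy_deriv x :
  D (energy g g1 ur ui ur1 ui1) x (- (g x * g2 x) * energy_rate g g1 ur ui ur1 ui1 x).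
Proof.
  destruct (hsol x) as (hur & hur1 & hui & hui1 & eqr & eqi).
  pose proof (hg x) as gx. assert (k2_eq : k2 x = / g x ^ 4).
  { pose proof (hquartic x). field_simplify_eq; [lra | apply Rgt_not_eq, gx]. }
  unfold energy, energy_rate, liouville_deriv, Rdiv.
  eapply deriv_eq; [differentiate; apply Rgt_not_eq, gx |].
  cbv beta. replace (ur2 x) with (- k2 x * ur x) by lra. replace (ui2 x) with (- k2 x * ui x) by lra.
  rewrite k2_eq. field. lra.
Qed.

(* Conservation of the flux (the Wronskian of [u] and its conjugate). *)
Lemma flux_constant x y : flux ur ui ur1 ui1 x = flux ur ui ur1 ui1 y.
Proof.
  apply constant_of_deriv_zero. intro z. destruct (hsol z) as (hur & hur1 & hui & hui1 & eqr & eqi).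
  unfold flux. eapply deriv_eq; [differentiate |].
  replace (ur2 z) with (- k2 z * ur z) by lra. replace (ui2 z) with (- k2 z * ui z) by lra. ring.
Qed.

(* [rate^2 + flux^2 = |psi|^2 |psi'|^2 <= energy^2]. *)
Lemma rate_flux_bound x :
  energy_rate g g1 ur ui ur1 ui1 x ^ 2 + flux ur ui ur1 ui1 x ^ 2 <= energy g g1 ur ui ur1 ui1 x ^ 2.
Proof.
  pose proof (hg x) as gx.
  assert (flux_eq : flux ur ui ur1 ui1 x
    = ur x / g x * liouville_deriv g g1 ui ui1 x - ui x / g x * liouville_deriv g g1 ur ur1 x).
  { unfold flux, liouville_deriv. field. lra. }
  rewrite flux_eq. unfold energy_rate, energy.
  set (a := ur x / g x). set (b := ui x / g x).
  set (c := liouville_deriv g g1 ur ur1 x). set (d := liouville_deriv g g1 ui ui1 x).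
  assert ((/ 2 * (a ^ 2 + b ^ 2 + c ^ 2 + d ^ 2)) ^ 2 - ((a * c + b * d) ^ 2 + (a * d - b * c) ^ 2)
          = / 4 * (a ^ 2 + b ^ 2 - c ^ 2 - d ^ 2) ^ 2) by field.
  pose proof (pow2_ge_0 (a ^ 2 + b ^ 2 - c ^ 2 - d ^ 2)). lra.
Qed.

Lemma energy_nonneg x : 0 <= energy g g1 ur ui ur1 ui1 x.
Proof. unfold energy. pose proof (pow2_ge_0 (ur x / g x)). pose proof (pow2_ge_0 (ui x / g x)).
  pose proof (pow2_ge_0 (liouville_deriv g g1 ur ur1 x)). pose proof (pow2_ge_0 (liouville_deriv g g1 ui ui1 x)). lra. Qed.

(* Along the solution the barrier can decrease only by the variation of an
   antiderivative [P] of [|g g''|]: its derivative is [- g g'' rate / S] with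
   [|rate| <= S = sqrt (E^2 - c^2 + dl)]. *)
Lemma barrier_variation P dl a b :
  (forall x, D P x (Rabs (g x * g2 x))) -> 0 < dl -> a <= b ->
  barrier (flux ur ui ur1 ui1 0) dl (energy g g1 ur ui ur1 ui1 a)
  - barrier (flux ur ui ur1 ui1 0) dl (energy g g1 ur ui ur1 ui1 b) <= P b - P a.
Proof.
  intros hP hdl hab.
  set (c := flux ur ui ur1 ui1 0). set (E := energy g g1 ur ui ur1 ui1).
  set (rate := energy_rate g g1 ur ui ur1 ui1). set (S := fun x => sqrt (E x ^ 2 - c ^ 2 + dl)).
  assert (rate_bound : forall x, rate x ^ 2 + c ^ 2 <= E x ^ 2).
  { intro x. unfold c. rewrite (flux_constant 0 x). apply rate_flux_bound. }
  assert (radicand_pos : forall x, 0 < E x ^ 2 - c ^ 2 + dl).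
  { intro x. pose proof (rate_bound x). pose proof (pow2_ge_0 (rate x)). lra. }
  assert (rate_le_S : forall x, Rabs (rate x) <= S x).
  { intro x. rewrite <- (Rabs_right (S x)) by (apply Rle_ge, sqrt_pos). apply Rsqr_le_abs_0.
    unfold S, Rsqr. rewrite sqrt_sqrt by (left; apply radicand_pos). pose proof (rate_bound x). nra. }
  enough (E_mono : barrier c dl (E b) + P b >= barrier c dl (E a) + P a) by lra.
  apply Rle_ge, (nondecreasing_of_deriv_nonneg (fun x => barrier c dl (E x) + P x)
                   (fun x => - (g x * g2 x) * rate x / S x + Rabs (g x * g2 x))); [| | exact hab].
  - intro x. apply deriv_plus; [| apply hP].
    apply deriv_barrier; [apply energy_deriv | apply radicand_pos | apply energy_nonneg].
  - intros x _. assert (0 < S x) by (apply sqrt_lt_R0, radicand_pos).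
    assert (Rabs (g x * g2 x) * Rabs (rate x) <= Rabs (g x * g2 x) * S x)
      by (apply Rmult_le_compat_l; [apply Rabs_pos | apply rate_le_S]).
    pose proof (Rle_abs (g x * g2 x * rate x)) as hle. rewrite (Rabs_mult (g x * g2 x)) in hle.
    apply Rmult_le_reg_r with (S x); [lra |].
    replace ((- (g x * g2 x) * rate x / S x + Rabs (g x * g2 x)) * S x)
      with (Rabs (g x * g2 x) * S x - g x * g2 x * rate x) by (field; lra). lra.
Qed.
End Energy.


Lemma energy_flux_along (g g1 ur ui ur1 ui1 : R -> R) (s : nat -> R) k a1 b1 a2 b2 :
  0 < k -> Un_cv (fun n => g (s n)) (/ sqrt k) -> Un_cv (fun n => g1 (s n)) 0 ->
  Un_cv (fun n => ur (s n)) a1 -> Un_cv (fun n => ur1 (s n)) (k * b1) ->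
  Un_cv (fun n => ui (s n)) a2 -> Un_cv (fun n => ui1 (s n)) (k * b2) ->
  Un_cv (fun n => energy g g1 ur ui ur1 ui1 (s n)) (k / 2 * (a1 ^ 2 + b1 ^ 2 + a2 ^ 2 + b2 ^ 2)) /\
  Un_cv (fun n => flux ur ui ur1 ui1 (s n)) (k * (a1 * b2 - a2 * b1)).
Proof.
  intros hk hg hg1 hur hur1 hui hui1.
  assert (hr : 0 < sqrt k) by (apply sqrt_lt_R0, hk). pose proof (sqrt_sqrt k (Rlt_le _ _ hk)) as hrr.
  assert (/ sqrt k <> 0) by (apply Rinv_neq_0_compat; lra).
  split.
  - unfold energy, liouville_deriv, Rdiv. eapply Un_cv_eq; [intro; reflexivity | | converge].
    set (r := sqrt k) in *. rewrite <- hrr. field. lra.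
  - unfold flux. eapply Un_cv_eq; [intro; reflexivity | | converge]. ring.
Qed.

Lemma exp_monotone x y : x <= y -> exp x <= exp y.
Proof. intros [h | ->]; [left; apply exp_increasing, h | right; reflexivity]. Qed.

Lemma barrier_ends_estimate c Em Ep I :
  0 <= Em -> 0 <= Ep -> c ^ 2 <= Em ^ 2 -> c ^ 2 <= Ep ^ 2 ->
  (forall dl, 0 < dl -> barrier c dl Em <= barrier c dl Ep + I) ->
  Em + sqrt (Em ^ 2 - c ^ 2) <= exp I * (Ep + sqrt (Ep ^ 2 - c ^ 2)).
Proof.
  intros hEm hEp hcm hcp hbar. pose proof (exp_pos I) as heI.
  assert (regularized : forall dl, 0 < dl ->
            Em + sqrt (Em ^ 2 - c ^ 2 + dl) <= exp I * (Ep + sqrt (Ep ^ 2 - c ^ 2 + dl))).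
  { intros dl hdl. specialize (hbar dl hdl). unfold barrier in hbar.
    pose proof (sqrt_lt_R0 (Em ^ 2 - c ^ 2 + dl) ltac:(lra)). pose proof (sqrt_lt_R0 (Ep ^ 2 - c ^ 2 + dl) ltac:(lra)).
    apply exp_monotone in hbar. rewrite exp_plus, !exp_ln in hbar by lra. lra. }
  assert (sqrt_subadd : forall A d, 0 <= A -> 0 <= d -> sqrt (A + d) <= sqrt A + sqrt d).
  { intros A d hA hd. rewrite <- (sqrt_pow2 (sqrt A + sqrt d)) by (pose proof (sqrt_pos A); pose proof (sqrt_pos d); lra).
    apply sqrt_le_1_alt. pose proof (sqrt_sqrt A hA). pose proof (sqrt_sqrt d hd).
    pose proof (sqrt_pos A). pose proof (sqrt_pos d). nra. }
  apply Rle_plus_epsilon. intros eps he.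
  set (dl := (eps / exp I) ^ 2).
  assert (hdl : 0 < dl) by (apply pow_lt, Rdiv_lt_0_compat; lra).
  assert (sqrt_dl : exp I * sqrt dl = eps) by (unfold dl; rewrite sqrt_pow2; [field | apply Rlt_le, Rdiv_lt_0_compat]; lra).
  pose proof (regularized dl hdl).
  pose proof (sqrt_le_1_alt (Em ^ 2 - c ^ 2) (Em ^ 2 - c ^ 2 + dl) ltac:(lra)).
  pose proof (sqrt_subadd (Ep ^ 2 - c ^ 2) dl ltac:(lra) ltac:(lra)).
  assert (exp I * sqrt (Ep ^ 2 - c ^ 2 + dl) <= exp I * (sqrt (Ep ^ 2 - c ^ 2) + sqrt dl))
    by (apply Rmult_le_compat_l; lra).
  nra.
Qed.


(* With unitarity [T = 1 - s^2], the estimate [(1 + s)^2 <= e^I T] says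
   [s <= tanh (I / 2)], that is [T >= sech^2 (I / 2)]. *)
Lemma sech_bound_of_estimate s I T :
  0 <= s -> T = 1 - s ^ 2 -> (1 + s) ^ 2 <= exp I * T -> T >= sech (I / 2) ^ 2.
Proof.
  intros hs hT hest.
  set (q := exp (I / 2)). assert (hq : 0 < q) by apply exp_pos.
  assert (heI : exp I = q * q) by (unfold q; rewrite <- exp_plus; f_equal; field).
  assert (hsech : sech (I / 2) ^ 2 = 4 * (q * q) / (q * q + 1) ^ 2).
  { unfold sech, cosh. rewrite exp_Ropp. fold q. field. split; nra. }
  rewrite hsech. rewrite heI in hest. set (e := q * q) in *. assert (0 < e) by (unfold e; nra).
  assert (1 + s <= e * (1 - s)).
  { rewrite hT in hest. assert ((1 + s) * (1 + s) <= e * (1 - s) * (1 + s)) by nra. nra. }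
  assert (s <= (e - 1) / (e + 1)).
  { apply Rmult_le_reg_r with (e + 1); [lra |]. unfold Rdiv. rewrite Rmult_assoc, Rinv_l by lra. lra. }
  assert (s ^ 2 <= ((e - 1) / (e + 1)) ^ 2) by (apply pow_incr; lra).
  assert (1 - ((e - 1) / (e + 1)) ^ 2 = 4 * e / (e + 1) ^ 2) by (field; lra).
  lra.
Qed.

Lemma is_solution_components k2 ur ui ur1 ui1 ur2 ui2 :
  is_solution k2 ur ui ur1 ui1 ur2 ui2 ->
  ((forall x, D ur x (ur1 x)) /\ (forall x, D ur1 x (ur2 x)) /\ (forall x, ur2 x + k2 x * ur x = 0)) /\
  ((forall x, D ui x (ui1 x)) /\ (forall x, D ui1 x (ui2 x)) /\ (forall x, ui2 x + k2 x * ui x = 0)).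
Proof. intro h. repeat split; intro x; apply (h x). Qed.

Section Scattering.
Variables (k2 w1 w2 ur ui ur1 ui1 ur2 ui2 : R -> R) (kinf rr ri tr ti I : R).
Hypothesis hkinf : 0 < kinf.
Hypothesis hlimp : lim_pinf k2 (kinf ^ 2).
Hypothesis hlimm : lim_minf k2 (kinf ^ 2).
Hypothesis hpos : forall x, 0 < k2 x.
Hypothesis hC2 : C2 (fun x => sqrt (k2 x)).
Hypothesis hw1 : forall x, D (envelope k2) x (w1 x).
Hypothesis hw2 : forall x, D w1 x (w2 x).
Hypothesis hsol : is_solution k2 ur ui ur1 ui1 ur2 ui2.
Hypothesis hleft : left_asymptotics kinf rr ri ur ui.
Hypothesis hright : right_asymptotics kinf tr ti ur ui.
Hypothesis hI : improper_integral (fun x => Rabs (envelope k2 x * w2 x)) I.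

Local Notation g := (envelope k2).
Local Notation E := (energy (envelope k2) w1 ur ui ur1 ui1).
Local Notation C := (flux ur ui ur1 ui1).
Local Notation T := (tr ^ 2 + ti ^ 2).
Local Notation R2 := (rr ^ 2 + ri ^ 2).

Lemma variation_budget : exists P, (forall x, D P x (Rabs (g x * w2 x))) /\ total_increment P I.
Proof.
  assert (hrho : continuity (fun x => Rabs (g x * w2 x))).
  { intro x. apply (continuity_pt_comp (fun y => g y * w2 y) Rabs); [| apply Rcontinuity_abs].
    apply continuity_pt_mult; [eapply continuity_of_deriv, hw1 |].
    apply (envelope_second_deriv_continuous k2 w1 w2); assumption. }
  destruct (antiderivative_exists _ hrho) as [P hP]. exists P.
  split; [exact hP | exact (improper_integral_increment _ P I hrho hP hI)].
Qed.

Lemma envelope_ends : lim_pinf g (/ sqrt kinf) /\ lim_minf g (/ sqrt kinf).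
Proof.
  split; [exact (envelope_limit k2 kinf hkinf hlimp) |].
  apply lim_minf_reflect, (envelope_limit (fun x => k2 (- x)) kinf hkinf), lim_minf_reflect, hlimm.
Qed.

Lemma envelope_slope_ends : lim_pinf w1 0 /\ lim_minf w1 0.
Proof.
  destruct variation_budget as [P [hP htotal]]. destruct (total_increment_tails P I htotal) as [tailp tailm].
  destruct envelope_ends as [gp gm].
  assert (hgam : 0 < / sqrt kinf) by (apply Rinv_0_lt_compat, sqrt_lt_R0, hkinf).
  split; [apply (slope_vanishes_pinf g w1 w2 P (/ sqrt kinf)) | apply (slope_vanishes_minf g w1 w2 P (/ sqrt kinf))];
    assumption.
Qed.

Lemma energy_flux_right :
  Un_cv (fun n => E (lattice kinf n)) (kinf * T) /\ Un_cv (fun n => C (lattice kinf n)) (kinf * T).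
Proof.
  destruct (is_solution_components _ _ _ _ _ _ _ hsol) as [[hur [hur1 eqr]] [hui [hui1 eqi]]].
  destruct hright as [wr wi]. destruct envelope_ends as [gp _]. destruct envelope_slope_ends as [sp _].
  assert (wr' : lim_pinf (fun x => ur x - wave kinf tr (- ti) x) 0)
    by (revert wr; apply lim_pinf_ext; intro x; unfold wave; cbv beta; ring).
  destruct (lattice_limits_pinf k2 ur ur1 ur2 kinf tr (- ti) hkinf hur hur1 eqr hlimp wr') as [lr lr1].
  destruct (lattice_limits_pinf k2 ui ui1 ui2 kinf ti tr hkinf hui hui1 eqi hlimp wi) as [li li1].
  destruct (energy_flux_along g w1 ur ui ur1 ui1 (lattice kinf) kinf tr (- ti) ti tr hkinf
              (lim_pinf_seq _ _ _ gp (lattice_diverges kinf hkinf))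
              (lim_pinf_seq _ _ _ sp (lattice_diverges kinf hkinf)) lr lr1 li li1) as [hE hC].
  split; [revert hE | revert hC]; apply Un_cv_eq; try reflexivity; field.
Qed.

Lemma energy_flux_left :
  Un_cv (fun n => E (- lattice kinf n)) (kinf * (1 + R2)) /\ Un_cv (fun n => C (- lattice kinf n)) (kinf * (1 - R2)).
Proof.
  destruct (is_solution_components _ _ _ _ _ _ _ hsol) as [[hur [hur1 eqr]] [hui [hui1 eqi]]].
  destruct hleft as [wr wi]. destruct envelope_ends as [_ gm]. destruct envelope_slope_ends as [_ sm].
  assert (wr' : lim_minf (fun x => ur x - wave kinf (1 + rr) ri x) 0)
    by (revert wr; apply lim_minf_ext; intro x; unfold wave; cbv beta; ring).
  assert (wi' : lim_minf (fun x => ui x - wave kinf ri (1 - rr) x) 0)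
    by (revert wi; apply lim_minf_ext; intro x; unfold wave; cbv beta; ring).
  destruct (lattice_limits_minf k2 ur ur1 ur2 kinf (1 + rr) ri hkinf hur hur1 eqr hlimm wr') as [lr lr1].
  destruct (lattice_limits_minf k2 ui ui1 ui2 kinf ri (1 - rr) hkinf hui hui1 eqi hlimm wi') as [li li1].
  apply lim_minf_reflect in gm, sm.
  destruct (energy_flux_along g w1 ur ui ur1 ui1 (fun n => - lattice kinf n) kinf (1 + rr) ri ri (1 - rr) hkinf
              (lim_pinf_seq _ _ _ gm (lattice_diverges kinf hkinf))
              (lim_pinf_seq _ _ _ sm (lattice_diverges kinf hkinf)) lr lr1 li li1) as [hE hC].
  split; [revert hE | revert hC]; apply Un_cv_eq; try reflexivity; field.
Qed.

Lemma flux_value : C 0 = kinf * T /\ C 0 = kinf * (1 - R2).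
Proof.
  destruct energy_flux_right as [_ hCp]. destruct energy_flux_left as [_ hCm].
  assert (const_seq : forall s : nat -> R, Un_cv (fun n => C (s n)) (C 0)).
  { intro s. apply (Un_cv_eq (fun _ => C 0) _ (C 0)); [| reflexivity | apply Un_cv_const].
    intro n. apply (flux_constant k2 ur ui ur1 ui1 ur2 ui2 hsol). }
  split; [exact (UL_sequence _ _ _ (const_seq _) hCp) | exact (UL_sequence _ _ _ (const_seq _) hCm)].
Qed.

Lemma unitarity : T = 1 - R2.
Proof. destruct flux_value as [cp cm]. apply Rmult_eq_reg_l with kinf; lra. Qed.

Lemma barrier_across dl : 0 < dl -> barrier (C 0) dl (kinf * (1 + R2)) <= barrier (C 0) dl (kinf * T) + I.
Proof.
  intro hdl. destruct variation_budget as [P [hP htotal]].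
  destruct energy_flux_right as [hEp _]. destruct energy_flux_left as [hEm _]. destruct flux_value as [cp cm].
  assert (hR2 : 0 <= R2) by nra. assert (hT : 0 <= T) by nra.
  apply Rle_plus_epsilon. intros eps he. rewrite Rplus_assoc.
  destruct (htotal eps he) as [M HM]. destruct (lattice_diverges kinf hkinf (Rabs M)) as [N HN].
  pose proof (RRle_abs M). pose proof (Rabs_pos M).
  apply (Un_cv_le (fun n => barrier (C 0) dl (E (- lattice kinf n))) (fun n => barrier (C 0) dl (E (lattice kinf n)))).
  - apply continuity_seq; [apply barrier_continuous; [rewrite cm; nra | nra] | exact hEm].
  - apply continuity_seq; [apply barrier_continuous; [rewrite cp; nra | nra] | exact hEp].
  - exists N. intros n hn. specialize (HN n hn).
    pose proof (barrier_variation k2 g w1 w2 ur ui ur1 ui1 ur2 ui2 (fun x => envelope_pos k2 x (hpos x))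
                  (fun x => envelope_quartic k2 x (hpos x)) hw1 hw2 hsol P dl (- lattice kinf n) (lattice kinf n)
                  hP hdl ltac:(lra)) as variation.
    pose proof (HM (- lattice kinf n) (lattice kinf n) ltac:(lra) ltac:(lra)) as total.
    apply Rabs_def2 in total. lra.
Qed.

Lemma transmission_estimate : (1 + sqrt R2) ^ 2 <= exp I * T.
Proof.
  destruct flux_value as [cp cm]. assert (hR2 : 0 <= R2) by nra. assert (hT : 0 <= T) by nra.
  pose proof (sqrt_pos R2) as hs. pose proof (pow2_sqrt R2 hR2) as hss. set (s := sqrt R2) in *.
  assert (left_root : sqrt ((kinf * (1 + R2)) ^ 2 - C 0 ^ 2) = 2 * kinf * s).
  { rewrite cm, <- (sqrt_pow2 (2 * kinf * s)) by nra. f_equal. rewrite <- hss. ring. }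
  assert (right_root : sqrt ((kinf * T) ^ 2 - C 0 ^ 2) = 0) by (rewrite cp, Rminus_diag; apply sqrt_0).
  pose proof (barrier_ends_estimate (C 0) (kinf * (1 + R2)) (kinf * T) I ltac:(nra) ltac:(nra)
                ltac:(rewrite cm; nra) ltac:(rewrite cp; nra) barrier_across) as est.
  rewrite left_root, right_root in est.
  apply Rmult_le_reg_l with kinf; [exact hkinf |]. rewrite <- hss in est. nra.
Qed.
End Scattering.

Theorem mainTheorem10
  (k2 : R -> R) (kinf : R) (hkinf : 0 < kinf)
  (hlimp : lim_pinf k2 (kinf ^ 2)) (hlimm : lim_minf k2 (kinf ^ 2))
  (hintp : integrable_near_pinf (fun x => k2 x - kinf ^ 2))
  (hintm : integrable_near_minf (fun x => k2 x - kinf ^ 2))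
  (hpos : forall x, 0 < k2 x)
  (hC2 : C2 (fun x => sqrt (k2 x)))
  (w1 w2 : R -> R)
  (hw1 : forall x, derivable_pt_lim (fun y => / sqrt (sqrt (k2 y))) x (w1 x))
  (hw2 : forall x, derivable_pt_lim w1 x (w2 x))
  (ur ui ur1 ui1 ur2 ui2 : R -> R) (rr ri tr ti : R)
  (hsol : is_solution k2 ur ui ur1 ui1 ur2 ui2)
  (hleft : left_asymptotics kinf rr ri ur ui)
  (hright : right_asymptotics kinf tr ti ur ui)
  (I : R)
  (hI : improper_integral
          (fun x => Rabs (/ sqrt (sqrt (k2 x)) * w2 x)) I) :
  transmission kinf kinf tr ti >= (sech (I / 2)) ^ 2.
Proof.
  unfold transmission. replace (kinf / kinf * (tr ^ 2 + ti ^ 2)) with (tr ^ 2 + ti ^ 2) by (field; lra).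
  apply (sech_bound_of_estimate (sqrt (rr ^ 2 + ri ^ 2))).
  - apply sqrt_pos.
  - rewrite pow2_sqrt by nra.
    exact (unitarity k2 w1 w2 ur ui ur1 ui1 ur2 ui2 kinf rr ri tr ti I
             hkinf hlimp hlimm hpos hC2 hw1 hw2 hsol hleft hright hI).
  - exact (transmission_estimate k2 w1 w2 ur ui ur1 ui1 ur2 ui2 kinf rr ri tr ti I
             hkinf hlimp hlimm hpos hC2 hw1 hw2 hsol hleft hright hI).
Qed.
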